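(* There is an absolute constant $c>0$ such that for all $k\ge 2$, $\gamma\in(0,1/4]$ and $\varepsilon\in(0,1]$: if each of $n$ users reports its sample via $\varepsilon$-Hadamard Response and the curator applies any (possibly randomized) decision rule to the $n$ reports so that the whole procedure outputs ``uniform'' with probability at least $2/3$ when $p=u$ and ``not uniform'' with probability at least $2/3$ whenever $d_{TV}(p,u)>\gamma$, then $n\ge c\,k^{3/2}/(\gamma^2\varepsilon^2)$.
   Context: Users hold i.i.d. samples from an unknown $p\in\Delta([k])$; $u$ is the uniform distribution on $[k]$; $d_{TV}(p,q)=\frac12\|p-q\|_1$. Hadamard Response (HR): let $K=2^{\lceil\log_2(k+1)\rceil}$ and let $H_K\in\{-1,1\}^{K\times K}$ be the Sylvester Hadamard matrix ($H_1=[1]$, $H_{2m}=\begin{bmatrix}H_m&H_m\\H_m&-H_m\end{bmatrix}$). Fix an injection $\phi:[k]\to\{2,\dots,K\}$ and set $C_x=\{z\in[K]:(H_K)_{\phi(x),z}=1\}$. On input $x\in[k]$, HR outputs $z\in[K]$ with probability $\frac{2}{K}\cdot\frac{e^\varepsilon}{e^\varepsilon+1}$ if $z\in C_x$ and $\frac{2}{K}\cdot\frac{1}{e^\varepsilon+1}$ otherwise, independently across users. *)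

From Stdlib Require Import Reals Lra Lia List Arith.
Open Scope R_scope.

Fixpoint sumR (n : nat) (f : nat -> R) : R :=
  match n with O => 0 | S m => sumR m f + f m end.

Fixpoint prodR (q : nat -> R) (zs : list nat) : R :=
  match zs with nil => 1 | z :: t => q z * prodR q t end.

(* sum of F over all lists of length n with entries in {0,...,K-1} *)
Fixpoint seqsum (n K : nat) (F : list nat -> R) : R :=
  match n with
  | O => F nil
  | S m => sumR K (fun z => seqsum m K (fun zs => F (z :: zs)))
  end.

(* Sylvester Hadamard matrix H_{2^m}, 0-based indices i,j < 2^m:
   H_1 = [1], H_{2h} = [[H_h, H_h],[H_h, -H_h]]. *)
Fixpoint hadamard (m : nat) (i j : nat) : R :=
  match m with
  | O => 1
  | S m' =>
      let h := Nat.pow 2 m' in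
      if Nat.ltb i h then
        (if Nat.ltb j h then hadamard m' i j else hadamard m' i (j - h))
      else
        (if Nat.ltb j h then hadamard m' (i - h) j else - hadamard m' (i - h) (j - h))
  end.

Definition HR_m (k : nat) : nat := Nat.log2_up (k + 1).
Definition HR_K (k : nat) : nat := Nat.pow 2 (HR_m k).

(* phi : [k] -> {2,...,K} in 1-based indexing, i.e. rows {1,...,K-1} 0-based;
   symbols x in [k] are represented as 0,...,k-1. *)
Definition valid_injection (k : nat) (phi : nat -> nat) : Prop :=
  (forall x, (x < k)%nat -> (1 <= phi x)%nat /\ (phi x < HR_K k)%nat) /\
  (forall x y, (x < k)%nat -> (y < k)%nat -> phi x = phi y -> x = y).

Definition HR_W (k : nat) (eps : R) (phi : nat -> nat) (x z : nat) : R :=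
  if Req_EM_T (hadamard (HR_m k) (phi x) z) 1
  then (2 / INR (HR_K k)) * (exp eps / (exp eps + 1))
  else (2 / INR (HR_K k)) * (1 / (exp eps + 1)).

Definition HR_out (k : nat) (eps : R) (phi : nat -> nat) (p : nat -> R) (z : nat) : R :=
  sumR k (fun x => p x * HR_W k eps phi x z).

Definition is_dist (k : nat) (p : nat -> R) : Prop :=
  (forall x, (x < k)%nat -> 0 <= p x) /\ sumR k p = 1.

Definition unif (k : nat) : nat -> R := fun _ => 1 / INR k.

Definition dTV (k : nat) (p q : nat -> R) : R :=
  (1/2) * sumR k (fun x => Rabs (p x - q x)).

(* Probability that the curator outputs "uniform", where T zs in [0,1] is the
   (randomized) rule's probability of outputting "uniform" on reports zs,
   and the n reports are i.i.d. from HR_out. *)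
Definition accept_prob (n k : nat) (eps : R) (phi : nat -> nat) (p : nat -> R)
  (T : list nat -> R) : R :=
  seqsum n (HR_K k) (fun zs => prodR (HR_out k eps phi p) zs * T zs).

(** The perturbations [p_b = (1 + 4 gamma sigma_b) / k] of the uniform distribution, where
    [sigma_b] takes opposite signs [+-1] on each pair [{2i, 2i+1}], are all gamma-far from
    uniform, so a correct test separates the law [Q] of the [n] reports under [u] from the
    average [M] of their laws under the [p_b]; this forces [chi^2(M, Q) >= 1/12].
    Through HR the report distribution of [p_b] is [q_u + c V_b], with [V_b] a signed sum of
    the [m] orthogonal vectors [H_phi(2i) - H_phi(2i+1)] and [c = 4 gamma beta / (k K)].
    Hence [chi^2(M, Q)] is the average over [b, b'] of [(1 + <theta_b', c_b>)^n - 1], where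
    Bessel's inequality gives [|c_b|^2 = O((gamma eps)^4 / k^3)]; averaging
    [exp (n <theta_b', c_b>)] over the signs [theta_b'] with [cosh x <= 1 / (1 - x^2)]
    bounds it by [1 / (1 - n^2 |c_b|^2) - 1].  So [n^2 (gamma eps)^4 / k^3] is bounded
    below. *)

From Stdlib Require Import Reals Lra Lia List Arith.
Open Scope R_scope.

(** * Finite sums *)

Lemma sumR_ext n f g : (forall i, (i < n)%nat -> f i = g i) -> sumR n f = sumR n g.
Proof.
  induction n as [|n IH]; intros H; simpl; auto.
  rewrite IH by (intros; apply H; lia). rewrite H by lia. reflexivity.
Qed.

Lemma sumR_plus n f g : sumR n (fun i => f i + g i) = sumR n f + sumR n g.
Proof. induction n as [|n IH]; simpl; [lra|]. rewrite IH; lra. Qed.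

Lemma sumR_minus n f g : sumR n (fun i => f i - g i) = sumR n f - sumR n g.
Proof. induction n as [|n IH]; simpl; [lra|]. rewrite IH; lra. Qed.

Lemma sumR_scal n c f : sumR n (fun i => c * f i) = c * sumR n f.
Proof. induction n as [|n IH]; simpl; [lra|]. rewrite IH; lra. Qed.

Lemma sumR_scalr n f c : sumR n f * c = sumR n (fun i => f i * c).
Proof. rewrite Rmult_comm, <- sumR_scal. apply sumR_ext; intros; ring. Qed.

Lemma sumR_le n f g : (forall i, (i < n)%nat -> f i <= g i) -> sumR n f <= sumR n g.
Proof.
  induction n as [|n IH]; intros H; simpl; [lra|].
  assert (sumR n f <= sumR n g) by (apply IH; intros; apply H; lia).
  assert (f n <= g n) by (apply H; lia). lra.
Qed.

Lemma sumR_const n c : sumR n (fun _ => c) = INR n * c.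
Proof. induction n as [|n IH]; simpl sumR; [simpl; lra|]. rewrite IH, S_INR; lra. Qed.

Lemma sumR_nonneg n f : (forall i, (i < n)%nat -> 0 <= f i) -> 0 <= sumR n f.
Proof.
  intros H. rewrite <- (Rmult_0_r (INR n)), <- sumR_const. apply sumR_le; auto.
Qed.

Lemma sumR_shift n f : sumR (S n) f = f 0%nat + sumR n (fun i => f (S i)).
Proof. induction n as [|n IH]; simpl; [lra|]. simpl in IH. rewrite IH. lra. Qed.

Lemma sumR_add a b f : sumR (a + b) f = sumR a f + sumR b (fun i => f (a + i)%nat).
Proof.
  induction b as [|b IH]; simpl.
  - rewrite Nat.add_0_r; lra.
  - rewrite Nat.add_succ_r. simpl. rewrite IH. lra.
Qed.

Lemma sumR_pairs m g :
  sumR (2 * m) g = sumR m (fun i => g (2 * i)%nat + g (2 * i + 1)%nat).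
Proof.
  induction m as [|m IH]; [simpl; lra|].
  replace (2 * S m)%nat with (S (S (2 * m))) by lia. cbn [sumR]. rewrite IH.
  replace (2 * m + 1)%nat with (S (2 * m)) by lia. lra.
Qed.

Lemma sumR_swap n m (F : nat -> nat -> R) :
  sumR n (fun i => sumR m (fun j => F i j)) = sumR m (fun j => sumR n (fun i => F i j)).
Proof.
  induction n as [|n IH]; simpl.
  - rewrite sumR_const; lra.
  - rewrite IH, <- sumR_plus. reflexivity.
Qed.

Lemma sumR_mul n m f g :
  sumR n f * sumR m g = sumR n (fun i => sumR m (fun j => f i * g j)).
Proof.
  rewrite sumR_scalr. apply sumR_ext; intros. rewrite <- sumR_scal. reflexivity.
Qed.

Lemma sumR_kron n i (g : nat -> R) : (i < n)%nat ->
  sumR n (fun l => if i =? l then g l else 0) = g i.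
Proof.
  induction n as [|n IH]; intros Hi; [lia|]. simpl.
  destruct (Nat.eq_dec i n) as [->|Hne].
  - rewrite Nat.eqb_refl, (sumR_ext _ _ (fun _ => 0)), sumR_const; [lra|].
    intros j Hj. destruct (Nat.eqb_spec n j); [lia|reflexivity].
  - rewrite IH by lia. destruct (Nat.eqb_spec i n); [lia|lra].
Qed.

Lemma seqsum_ext n K F G : (forall zs, F zs = G zs) -> seqsum n K F = seqsum n K G.
Proof.
  revert F G; induction n as [|n IH]; simpl; intros F G H; auto.
  apply sumR_ext; intros. apply IH; auto.
Qed.

Lemma seqsum_plus n K F G :
  seqsum n K (fun zs => F zs + G zs) = seqsum n K F + seqsum n K G.
Proof.
  revert F G; induction n as [|n IH]; simpl; intros; auto.
  rewrite <- sumR_plus. apply sumR_ext; intros. apply IH.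
Qed.

Lemma seqsum_scal n K c F : seqsum n K (fun zs => c * F zs) = c * seqsum n K F.
Proof.
  revert F; induction n as [|n IH]; simpl; intros; auto.
  rewrite <- sumR_scal. apply sumR_ext; intros. apply IH.
Qed.

Lemma seqsum_minus n K F G :
  seqsum n K (fun zs => F zs - G zs) = seqsum n K F - seqsum n K G.
Proof.
  rewrite (seqsum_ext _ _ _ (fun zs => F zs + -1 * G zs)) by (intros; ring).
  rewrite seqsum_plus, seqsum_scal. ring.
Qed.

Lemma seqsum_le n K F G : (forall zs, F zs <= G zs) -> seqsum n K F <= seqsum n K G.
Proof.
  revert F G; induction n as [|n IH]; simpl; intros F G H; auto.
  apply sumR_le; intros. apply IH; auto.
Qed.

Lemma seqsum_const n K c : seqsum n K (fun _ => c) = INR K ^ n * c.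
Proof.
  revert c; induction n as [|n IH]; simpl; intros; [lra|].
  rewrite (sumR_ext _ _ (fun _ => INR K ^ n * c)), sumR_const by (intros; apply IH). lra.
Qed.

Lemma seqsum_nonneg n K F : (forall zs, 0 <= F zs) -> 0 <= seqsum n K F.
Proof.
  intros H. rewrite <- (Rmult_0_r (INR K ^ n)), <- seqsum_const. apply seqsum_le; auto.
Qed.

Lemma seqsum_prodR n K f : seqsum n K (prodR f) = sumR K f ^ n.
Proof.
  induction n as [|n IH]; simpl; auto.
  rewrite Rmult_comm, <- sumR_scal. apply sumR_ext; intros.
  cbn [prodR]. rewrite seqsum_scal, IH. ring.
Qed.

Lemma seqsum_sumR n K m F :
  seqsum n K (fun zs => sumR m (fun i => F i zs)) = sumR m (fun i => seqsum n K (F i)).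
Proof.
  revert F; induction n as [|n IH]; simpl; intros; auto.
  rewrite (sumR_ext _ _ (fun z => sumR m (fun i => seqsum n K (fun zs => F i (z :: zs))))).
  - apply sumR_swap.
  - intros z _. apply (IH (fun i zs => F i (z :: zs))).
Qed.

Lemma seqsum_swap n K m L (F : list nat -> list nat -> R) :
  seqsum n K (fun zs => seqsum m L (fun bs => F zs bs))
  = seqsum m L (fun bs => seqsum n K (fun zs => F zs bs)).
Proof.
  revert F; induction n as [|n IH]; simpl; intros; auto.
  rewrite (sumR_ext _ _ (fun z => seqsum m L (fun bs => seqsum n K (fun zs => F (z :: zs) bs)))).
  - symmetry. apply (seqsum_sumR m L K (fun z bs => seqsum n K (fun zs => F (z :: zs) bs))).
  - intros. apply (IH (fun zs bs => F (i :: zs) bs)).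
Qed.

Lemma seqsum_mul m L f g :
  seqsum m L f * seqsum m L g = seqsum m L (fun b => seqsum m L (fun b' => f b * g b')).
Proof.
  rewrite Rmult_comm, <- seqsum_scal. apply seqsum_ext; intros.
  rewrite Rmult_comm, <- seqsum_scal. apply seqsum_ext; intros; ring.
Qed.

Lemma prodR_pos f zs : (forall z, 0 < f z) -> 0 < prodR f zs.
Proof. induction zs; simpl; intros; [lra|]. apply Rmult_lt_0_compat; auto. Qed.

Lemma prodR_quot f g h zs : (forall z, 0 < h z) ->
  prodR f zs * prodR g zs / prodR h zs = prodR (fun z => f z * g z / h z) zs.
Proof.
  induction zs as [|z zs IH]; simpl; intros H; [field|].
  rewrite <- IH by auto.
  assert (0 < h z) by auto. assert (0 < prodR h zs) by (apply prodR_pos; auto).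
  field; lra.
Qed.

(** * The Sylvester-Hadamard matrix *)

Lemma hadamard_pm1 m i j : hadamard m i j = 1 \/ hadamard m i j = -1.
Proof.
  revert i j; induction m as [|m IH]; simpl; intros; auto.
  destruct (i <? 2 ^ m), (j <? 2 ^ m); auto.
  destruct (IH (i - 2 ^ m)%nat (j - 2 ^ m)%nat) as [-> | ->]; lra.
Qed.

Lemma hadamard_row0 m z : (z < 2 ^ m)%nat -> hadamard m 0 z = 1.
Proof.
  revert z; induction m as [|m IH]; simpl; intros z Hz; auto.
  rewrite (proj2 (Nat.ltb_lt 0 _)) by (pose proof (Nat.pow_nonzero 2 m); lia).
  destruct (Nat.ltb_spec z (2 ^ m)); apply IH; lia.
Qed.

Definition hsign (m i : nat) : R := if i <? 2 ^ m then 1 else -1.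
Definition hhalf (m i : nat) : nat := if i <? 2 ^ m then i else (i - 2 ^ m)%nat.

Lemma hadamard_S_left m i z : (z < 2 ^ m)%nat ->
  hadamard (S m) i z = hadamard m (hhalf m i) z.
Proof.
  intros Hz. cbn [hadamard]. rewrite (proj2 (Nat.ltb_lt z _) Hz).
  unfold hhalf. destruct (i <? 2 ^ m); reflexivity.
Qed.

Lemma hadamard_S_right m i z :
  hadamard (S m) i (2 ^ m + z) = hsign m i * hadamard m (hhalf m i) z.
Proof.
  cbn [hadamard]. rewrite (proj2 (Nat.ltb_ge (2 ^ m + z) _)) by lia.
  replace (2 ^ m + z - 2 ^ m)%nat with z by lia.
  unfold hsign, hhalf. destruct (i <? 2 ^ m); ring.
Qed.

Lemma hadamard_orth m i j : (i < 2 ^ m)%nat -> (j < 2 ^ m)%nat ->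
  sumR (2 ^ m) (fun z => hadamard m i z * hadamard m j z)
  = if i =? j then INR (2 ^ m) else 0.
Proof.
  revert i j; induction m as [|m IH]; intros i j Hi Hj.
  { simpl in *. replace i with 0%nat by lia. replace j with 0%nat by lia. simpl; lra. }
  assert (E : (2 ^ S m = 2 ^ m + 2 ^ m)%nat) by (simpl; lia).
  rewrite E in *. rewrite sumR_add, plus_INR.
  rewrite (sumR_ext _ (fun z => hadamard (S m) i (2 ^ m + z) * hadamard (S m) j (2 ^ m + z))
                    (fun z => hsign m i * hsign m j *
                              (hadamard m (hhalf m i) z * hadamard m (hhalf m j) z)))
    by (intros; rewrite !hadamard_S_right; ring).
  rewrite (sumR_ext _ _ (fun z => hadamard m (hhalf m i) z * hadamard m (hhalf m j) z))
    by (intros; rewrite !hadamard_S_left by lia; reflexivity).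
  rewrite sumR_scal, IH by (unfold hhalf; destruct (Nat.ltb_spec i (2 ^ m)),
                                              (Nat.ltb_spec j (2 ^ m)); lia).
  unfold hsign, hhalf.
  destruct (Nat.ltb_spec i (2 ^ m)), (Nat.ltb_spec j (2 ^ m));
    repeat match goal with |- context [Nat.eqb ?a ?b] => destruct (Nat.eqb_spec a b) end;
    try lia; lra.
Qed.

Lemma hadamard_rowsum m i : (1 <= i)%nat -> (i < 2 ^ m)%nat ->
  sumR (2 ^ m) (fun z => hadamard m i z) = 0.
Proof.
  intros H1 H2.
  rewrite (sumR_ext _ _ (fun z => hadamard m i z * hadamard m 0 z))
    by (intros; rewrite hadamard_row0 by auto; ring).
  rewrite hadamard_orth by lia. destruct (Nat.eqb_spec i 0); [lia|reflexivity].
Qed.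

(** * Hadamard Response *)

Local Notation KR k := (INR (HR_K k)).
Local Notation hrow k i z := (hadamard (HR_m k) i z).

Definition beta (eps : R) : R := (exp eps - 1) / (exp eps + 1).

Lemma KR_pos k : 0 < KR k.
Proof. apply lt_0_INR, Nat.neq_0_lt_0, Nat.pow_nonzero. lia. Qed.

Lemma HR_W_eq k eps phi x z :
  HR_W k eps phi x z = (1 + beta eps * hrow k (phi x) z) / KR k.
Proof.
  unfold HR_W, beta. pose proof (KR_pos k). pose proof (exp_pos eps).
  destruct (Req_EM_T (hrow k (phi x) z) 1) as [->|E].
  - field; lra.
  - destruct (hadamard_pm1 (HR_m k) (phi x) z) as [ | ->]; [contradiction|]. field; lra.
Qed.

Lemma HR_W_rowsum k eps phi x : valid_injection k phi -> (x < k)%nat ->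
  sumR (HR_K k) (HR_W k eps phi x) = 1.
Proof.
  intros [Hrange _] Hx. destruct (Hrange x Hx). pose proof (KR_pos k).
  rewrite (sumR_ext _ _ (fun z => / KR k + beta eps / KR k * hrow k (phi x) z))
    by (intros; rewrite HR_W_eq; field; lra).
  rewrite sumR_plus, sumR_scal, sumR_const. unfold HR_K in *. rewrite hadamard_rowsum by auto.
  field; lra.
Qed.

Lemma HR_out_sum k eps phi p : valid_injection k phi ->
  sumR (HR_K k) (HR_out k eps phi p) = sumR k p.
Proof.
  intros Hphi. unfold HR_out. rewrite <- sumR_swap. apply sumR_ext; intros x Hx.
  rewrite sumR_scal, HR_W_rowsum by auto. ring.
Qed.

Lemma exp_le_1_plus_3x x : 0 < x -> x <= 1 -> exp x <= 1 + 3 * x.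
Proof.
  intros H1 H2.
  assert (E : exp x = exp (x / 2) * exp (x / 2)) by (rewrite <- exp_plus; f_equal; lra).
  assert (E2 : exp (x / 2) * exp (- (x / 2)) = 1)
    by (rewrite <- exp_plus, <- exp_0; f_equal; lra).
  pose proof (exp_ineq1_le (- (x / 2))). pose proof (exp_pos (x / 2)).
  (* [exp (x/2) <= 1 / (1 - x/2) <= 1 + x] since [x <= 1] *)
  assert (exp (x / 2) <= 1 + x).
  { assert (exp (x / 2) * (1 - x / 2) <= 1) by nra. nra. }
  rewrite E. nra.
Qed.

Lemma beta_bounds eps : 0 < eps -> eps <= 1 ->
  0 < beta eps /\ beta eps <= 3 / 2 * eps /\ 2 / 5 <= 1 - beta eps.
Proof.
  intros H1 H2. pose proof (exp_ineq1_le eps). pose proof (exp_le_1_plus_3x eps H1 H2).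
  unfold beta. repeat split.
  - apply Rdiv_lt_0_compat; lra.
  - apply Rmult_le_reg_r with (exp eps + 1); [lra|].
    unfold Rdiv. rewrite Rmult_assoc, Rinv_l by lra. nra.
  - cut ((exp eps - 1) / (exp eps + 1) <= 3 / 5); [lra|].
    apply Rmult_le_reg_r with (exp eps + 1); [lra|].
    unfold Rdiv. rewrite Rmult_assoc, Rinv_l by lra. nra.
Qed.

Lemma HR_out_nonneg k eps phi p z : 0 < eps -> eps <= 1 ->
  (forall x, (x < k)%nat -> 0 <= p x) -> 0 <= HR_out k eps phi p z.
Proof.
  intros He0 He1 Hp. destruct (beta_bounds eps He0 He1) as [Hb0 [_ Hb1]]. pose proof (KR_pos k).
  apply sumR_nonneg; intros x Hx. apply Rmult_le_pos; auto.
  rewrite HR_W_eq. apply Rmult_le_pos; [|apply Rlt_le, Rinv_0_lt_compat; lra].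
  destruct (hadamard_pm1 (HR_m k) (phi x) z) as [-> | ->]; lra.
Qed.

Lemma unif_is_dist k : (1 <= k)%nat -> is_dist k (unif k).
Proof.
  intros Hk. assert (0 < INR k) by (apply lt_0_INR; lia). unfold unif. split.
  - intros. apply Rlt_le, Rdiv_lt_0_compat; lra.
  - rewrite sumR_const. field; lra.
Qed.

Lemma HR_out_unif_ge k eps phi z : (1 <= k)%nat -> 0 < eps -> eps <= 1 ->
  (1 - beta eps) / KR k <= HR_out k eps phi (unif k) z.
Proof.
  intros Hk He0 He1. destruct (beta_bounds eps He0 He1) as [Hb0 [_ Hb1]].
  pose proof (KR_pos k). assert (0 < INR k) by (apply lt_0_INR; lia).
  replace ((1 - beta eps) / KR k) with (sumR k (fun _ => 1 / INR k * ((1 - beta eps) / KR k)))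
    by (rewrite sumR_const; field; lra).
  apply sumR_le; intros x Hx. rewrite HR_W_eq. unfold unif.
  apply Rmult_le_compat_l; [apply Rlt_le, Rdiv_lt_0_compat; lra|].
  apply Rmult_le_compat_r; [apply Rlt_le, Rinv_0_lt_compat; lra|].
  destruct (hadamard_pm1 (HR_m k) (phi x) z) as [-> | ->]; lra.
Qed.

(** * Paired perturbations of the uniform distribution *)

(* A list [bs] of bits (the index of [seqsum _ 2]) encodes the signs of the
   perturbation; [pair_sign m bs] puts [+-coin_sign bs i] on the pair [2i, 2i+1]
   and leaves the last symbol alone when [k] is odd. *)
Definition coin_sign (bs : list nat) (i : nat) : R := if nth i bs 0%nat =? 0 then 1 else -1.

Definition pair_sign (m : nat) (bs : list nat) (x : nat) : R :=
  if x <? 2 * m then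
    (if x =? 2 * Nat.div2 x then coin_sign bs (Nat.div2 x) else - coin_sign bs (Nat.div2 x))
  else 0.

Definition perturbed (a : R) (k m : nat) (bs : list nat) (x : nat) : R :=
  (1 + a * pair_sign m bs x) / INR k.

Lemma coin_sign_pm1 bs i : coin_sign bs i = 1 \/ coin_sign bs i = -1.
Proof. unfold coin_sign. destruct (_ =? 0); auto. Qed.

Lemma pair_sign_even m bs i : (i < m)%nat -> pair_sign m bs (2 * i) = coin_sign bs i.
Proof.
  intros. unfold pair_sign. rewrite (proj2 (Nat.ltb_lt _ _)) by lia.
  rewrite Nat.div2_double, Nat.eqb_refl. reflexivity.
Qed.

Lemma pair_sign_odd m bs i : (i < m)%nat -> pair_sign m bs (2 * i + 1) = - coin_sign bs i.
Proof.
  intros. unfold pair_sign. rewrite (proj2 (Nat.ltb_lt _ _)) by lia.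
  replace (2 * i + 1)%nat with (S (2 * i)) by lia. rewrite Nat.div2_succ_double.
  destruct (Nat.eqb_spec (S (2 * i)) (2 * i)); [lia|reflexivity].
Qed.

Lemma pair_sign_tail m bs x : (2 * m <= x)%nat -> pair_sign m bs x = 0.
Proof. intros. unfold pair_sign. rewrite (proj2 (Nat.ltb_ge _ _)) by lia. reflexivity. Qed.

Lemma pair_sign_bound m bs x : -1 <= pair_sign m bs x <= 1.
Proof.
  unfold pair_sign. destruct (coin_sign_pm1 bs (Nat.div2 x)) as [-> | ->];
    destruct (x <? 2 * m); try destruct (_ =? _); lra.
Qed.

Lemma sumR_pairs_tail k m r G : k = (2 * m + r)%nat -> (forall x, (2 * m <= x)%nat -> G x = 0) ->
  sumR k G = sumR m (fun i => G (2 * i)%nat + G (2 * i + 1)%nat).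
Proof.
  intros -> H. rewrite sumR_add, sumR_pairs, (sumR_ext r _ (fun _ => 0)), sumR_const.
  - lra.
  - intros; apply H; lia.
Qed.

Lemma sumR_pair_sign k m r bs g : k = (2 * m + r)%nat ->
  sumR k (fun x => pair_sign m bs x * g x)
  = sumR m (fun i => coin_sign bs i * (g (2 * i)%nat - g (2 * i + 1)%nat)).
Proof.
  intros Hk. rewrite (sumR_pairs_tail k m r)
    by (auto; intros; rewrite pair_sign_tail by auto; ring).
  apply sumR_ext; intros. rewrite pair_sign_even, pair_sign_odd by auto. ring.
Qed.

Lemma perturbed_is_dist a k m r bs : k = (2 * m + r)%nat -> (1 <= m)%nat -> 0 <= a <= 1 ->
  is_dist k (perturbed a k m bs).
Proof.
  intros Hk Hm Ha. assert (0 < INR k) by (apply lt_0_INR; lia). split.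
  - intros x Hx. unfold perturbed. pose proof (pair_sign_bound m bs x).
    apply Rmult_le_pos; [nra | apply Rlt_le, Rinv_0_lt_compat; lra].
  - rewrite (sumR_ext _ _ (fun x => / INR k + a / INR k * (pair_sign m bs x * 1)))
      by (intros; unfold perturbed; field; lra).
    rewrite sumR_plus, sumR_scal, sumR_const, (sumR_pair_sign k m r) by auto.
    rewrite (sumR_ext m _ (fun _ => 0)), sumR_const by (intros; ring). field; lra.
Qed.

Lemma perturbed_far a gamma k m r bs :
  k = (2 * m + r)%nat -> (r <= 1)%nat -> (1 <= m)%nat -> a = 4 * gamma -> 0 < gamma ->
  dTV k (perturbed a k m bs) (unif k) > gamma.
Proof.
  intros Hk Hr Hm Ha Hg. assert (0 < INR k) by (apply lt_0_INR; lia). unfold dTV.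
  rewrite (sumR_pairs_tail k m r), (sumR_ext m _ (fun _ => 2 * (a / INR k))), sumR_const.
  - assert (INR k = 2 * INR m + INR r) by (rewrite Hk, plus_INR, mult_INR; simpl; lra).
    assert (INR r <= 1) by (apply (le_INR r 1) in Hr; simpl in Hr; lra).
    assert (1 <= INR m) by (apply (le_INR 1 m) in Hm; simpl in Hm; lra).
    apply Rlt_gt, Rmult_lt_reg_r with (INR k); [lra|].
    unfold Rdiv. field_simplify; [|lra]. subst a. nra.
  - intros i Hi. unfold perturbed, unif. rewrite pair_sign_even, pair_sign_odd by auto.
    replace ((1 + a * coin_sign bs i) / INR k - 1 / INR k) with (a / INR k * coin_sign bs i)
      by (field; lra).
    replace ((1 + a * - coin_sign bs i) / INR k - 1 / INR k) with (- (a / INR k * coin_sign bs i))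
      by (field; lra).
    assert (Habs : Rabs (coin_sign bs i) = 1)
      by (destruct (coin_sign_pm1 bs i) as [-> | ->]; unfold Rabs; destruct (Rcase_abs _); lra).
    rewrite Rabs_Ropp, Rabs_mult, Habs, Rabs_right.
    + ring.
    + apply Rle_ge, Rmult_le_pos; [lra | apply Rlt_le, Rinv_0_lt_compat; lra].
  - auto.
  - intros. unfold perturbed, unif. rewrite pair_sign_tail by auto.
    replace ((1 + a * 0) / INR k - 1 / INR k) with 0 by (field; lra). apply Rabs_R0.
Qed.

(** * Orthogonal systems and exponential moments *)

Section OrthogonalSystem.

Variables (K m : nat) (D : nat -> nat -> R) (s : R).
Hypothesis D_orth : forall i l, (i < m)%nat -> (l < m)%nat ->
  sumR K (fun z => D i z * D l z) = if i =? l then s else 0.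

Lemma sumR_orth_expansion x y :
  sumR K (fun z => sumR m (fun i => x i * D i z) * sumR m (fun l => y l * D l z))
  = s * sumR m (fun i => x i * y i).
Proof.
  rewrite (sumR_ext K _ (fun z => sumR m (fun i => sumR m (fun l => x i * D i z * (y l * D l z)))))
    by (intros; apply sumR_mul).
  rewrite sumR_swap, <- sumR_scal. apply sumR_ext; intros i Hi.
  rewrite sumR_swap, (sumR_ext m _ (fun l => if i =? l then s * (x i * y i) else 0)).
  - apply (sumR_kron m i (fun _ => s * (x i * y i))); auto.
  - intros l Hl. rewrite (sumR_ext K _ (fun z => x i * y l * (D i z * D l z))) by (intros; ring).
    rewrite sumR_scal, D_orth by auto. destruct (Nat.eqb_spec i l); [subst; ring | ring].
Qed.

Lemma bessel_inequality f : 0 < s ->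
  sumR m (fun i => sumR K (fun z => D i z * f z) ^ 2) <= s * sumR K (fun z => f z ^ 2).
Proof.
  intros Hs. set (al := fun i => sumR K (fun z => D i z * f z)).
  set (g := fun z => sumR m (fun i => al i / s * D i z)).
  set (S2 := sumR m (fun i => al i ^ 2)).
  assert (Hfg : sumR K (fun z => f z * g z) = S2 / s).
  { unfold g. rewrite (sumR_ext K _ (fun z => sumR m (fun i => al i / s * (D i z * f z)))).
    - rewrite sumR_swap. unfold S2, Rdiv. rewrite sumR_scalr.
      apply sumR_ext; intros. rewrite sumR_scal. unfold al. ring.
    - intros. rewrite Rmult_comm, sumR_scalr. apply sumR_ext; intros; ring. }
  assert (Hgg : sumR K (fun z => g z * g z) = S2 / s).
  { unfold g. rewrite sumR_orth_expansion. unfold S2, Rdiv. rewrite sumR_scalr, <- sumR_scal.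
    apply sumR_ext; intros. field. lra. }
  assert (H0 : 0 <= sumR K (fun z => (f z - g z) ^ 2))
    by (apply sumR_nonneg; intros; apply pow2_ge_0).
  rewrite (sumR_ext K _ (fun z => f z ^ 2 + (-2) * (f z * g z) + g z * g z)) in H0
    by (intros; ring).
  rewrite !sumR_plus, sumR_scal, Hfg, Hgg in H0.
  apply Rmult_le_reg_l with (/ s); [apply Rinv_0_lt_compat; lra|].
  replace (/ s * (s * sumR K (fun z => f z ^ 2))) with (sumR K (fun z => f z ^ 2)) by (field; lra).
  change (/ s * S2 <= sumR K (fun z => f z ^ 2)). unfold Rdiv in H0. lra.
Qed.

End OrthogonalSystem.

Lemma exp_pow_INR x n : exp x ^ n = exp (INR n * x).
Proof.
  induction n as [|n IH]; [simpl; rewrite Rmult_0_l, exp_0; reflexivity|].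
  rewrite S_INR. simpl. rewrite IH, <- exp_plus. f_equal; ring.
Qed.

Lemma pow_le_exp_pred A n : 0 <= A -> A ^ n <= exp (INR n * (A - 1)).
Proof.
  intros HA. rewrite <- exp_pow_INR. apply pow_incr. split; [assumption|].
  pose proof (exp_ineq1_le (A - 1)). lra.
Qed.

(* From [1 + x <= exp x] applied to [x] and [-x]: [exp x <= 1/(1-x)], [exp (-x) <= 1/(1+x)]. *)
Lemma cosh_le_inv x : x ^ 2 < 1 -> exp x + exp (- x) <= 2 / (1 - x ^ 2).
Proof.
  intros H. assert (-1 < x < 1) by nra.
  pose proof (exp_ineq1_le x). pose proof (exp_ineq1_le (- x)).
  assert (E : exp x * exp (- x) = 1) by (rewrite <- exp_plus, <- exp_0; f_equal; lra).
  pose proof (exp_pos x). pose proof (exp_pos (- x)).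
  assert (exp x <= / (1 - x)).
  { apply Rmult_le_reg_r with (1 - x); [lra|]. rewrite Rinv_l by lra. nra. }
  assert (exp (- x) <= / (1 + x)).
  { apply Rmult_le_reg_r with (1 + x); [lra|]. rewrite Rinv_l by lra. nra. }
  replace (2 / (1 - x ^ 2)) with (/ (1 - x) + / (1 + x)) by (field; lra). lra.
Qed.

Lemma seqsum_exp_coin_signs_le m c : sumR m (fun i => c i ^ 2) < 1 ->
  seqsum m 2 (fun bs => exp (sumR m (fun i => coin_sign bs i * c i)))
  <= 2 ^ m / (1 - sumR m (fun i => c i ^ 2)).
Proof.
  revert c; induction m as [|m IH]; intros c Hc.
  { simpl. rewrite exp_0. lra. }
  cbn [seqsum].
  set (S' := seqsum m 2 (fun bs => exp (sumR m (fun i => coin_sign bs i * c (S i))))).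
  assert (Hsplit : forall z, seqsum m 2 (fun bs => exp (sumR (S m) (fun i => coin_sign (z :: bs) i * c i)))
                             = exp (coin_sign (z :: nil) 0 * c 0%nat) * S').
  { intros z. unfold S'. rewrite <- seqsum_scal. apply seqsum_ext; intros bs.
    rewrite sumR_shift, exp_plus. reflexivity. }
  assert (Hsum2 : forall g, sumR 2 g = g 0%nat + g 1%nat) by (intros; simpl; ring).
  rewrite Hsum2. cbv beta. rewrite !Hsplit. unfold coin_sign; simpl nth; cbn [Nat.eqb].
  replace (-1 * c 0%nat) with (- c 0%nat) by ring. rewrite Rmult_1_l.
  rewrite sumR_shift in Hc |- *.
  set (y := sumR m (fun i => c (S i) ^ 2)) in Hc |- *.
  assert (Hy : 0 <= y) by (apply sumR_nonneg; intros; apply pow2_ge_0).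
  assert (Hx : 0 <= c 0%nat ^ 2) by apply pow2_ge_0.
  assert (HS' : S' <= 2 ^ m / (1 - y)) by (apply IH; change (y < 1); lra).
  assert (HS'0 : 0 <= S') by (apply seqsum_nonneg; intros; apply Rlt_le, exp_pos).
  pose proof (cosh_le_inv (c 0%nat) ltac:(lra)).
  pose proof (exp_pos (c 0%nat)). pose proof (exp_pos (- c 0%nat)).
  apply Rle_trans with (2 / (1 - c 0%nat ^ 2) * (2 ^ m / (1 - y))).
  { rewrite <- Rmult_plus_distr_r. apply Rmult_le_compat; lra. }
  (* [(1 - x)(1 - y) >= 1 - (x + y)] for [x, y >= 0] *)
  replace (2 / (1 - c 0%nat ^ 2) * (2 ^ m / (1 - y)))
    with (2 ^ S m * / ((1 - c 0%nat ^ 2) * (1 - y))) by (simpl; field; lra).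
  unfold Rdiv. apply Rmult_le_compat_l; [apply pow_le; lra|].
  apply Rinv_le_contravar; [lra|]. nra.
Qed.

Lemma seqsum_pow_affine_le m n A c :
  (forall b, 0 <= A b) -> (forall b, A b = 1 + sumR m (fun i => coin_sign b i * c i)) ->
  INR n ^ 2 * sumR m (fun i => c i ^ 2) < 1 ->
  seqsum m 2 (fun b => A b ^ n) <= 2 ^ m / (1 - INR n ^ 2 * sumR m (fun i => c i ^ 2)).
Proof.
  intros HA0 HA Hc.
  assert (E : INR n ^ 2 * sumR m (fun i => c i ^ 2) = sumR m (fun i => (INR n * c i) ^ 2))
    by (rewrite <- sumR_scal; apply sumR_ext; intros; ring).
  rewrite E in Hc |- *. eapply Rle_trans; [|apply seqsum_exp_coin_signs_le; exact Hc].
  apply seqsum_le; intros b. eapply Rle_trans; [apply pow_le_exp_pred, HA0|].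
  rewrite HA. right. f_equal.
  transitivity (INR n * sumR m (fun i => coin_sign b i * c i)); [ring|].
  rewrite <- sumR_scal. apply sumR_ext; intros. ring.
Qed.

(** * The chi-square method for product measures *)

(* [3 x^2 / Q + Q / 12 - x T = 3 (x - Q T / 6)^2 / Q + Q (1 - T^2) / 12] *)
Lemma test_gap_le Q M T : 0 < Q -> 0 <= T <= 1 ->
  (Q - M) * T <= 3 * ((Q - M) ^ 2 / Q) + Q / 12.
Proof.
  intros HQ HT. set (x := Q - M).
  apply Rmult_le_reg_r with Q; [lra|].
  replace ((3 * (x ^ 2 / Q) + Q / 12) * Q) with (3 * x ^ 2 + Q * Q / 12) by (field; lra).
  assert (0 <= Q * T <= Q) by (split; nra).
  assert (0 <= 3 * (x - Q * T / 6) ^ 2) by (apply Rmult_le_pos; [lra|apply pow2_ge_0]).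
  nra.
Qed.

Lemma chi2_ge_of_test n K Q M T :
  (forall zs, 0 < Q zs) -> seqsum n K Q = 1 -> (forall zs, 0 <= T zs <= 1) ->
  2 / 3 <= seqsum n K (fun zs => Q zs * T zs) -> seqsum n K (fun zs => M zs * T zs) <= 1 / 3 ->
  1 / 12 <= seqsum n K (fun zs => (Q zs - M zs) ^ 2 / Q zs).
Proof.
  intros HQ HQ1 HT Hacc Hrej.
  assert (H : seqsum n K (fun zs => Q zs * T zs - M zs * T zs)
              <= seqsum n K (fun zs => 3 * ((Q zs - M zs) ^ 2 / Q zs) + / 12 * Q zs)).
  { apply seqsum_le; intros zs. replace (/ 12 * Q zs) with (Q zs / 12) by field.
    rewrite <- Rmult_minus_distr_r. apply test_gap_le; auto. }
  rewrite seqsum_minus, seqsum_plus, !seqsum_scal, HQ1 in H. lra.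
Qed.

Lemma mixture_test_le n K m L P T c : (1 <= L)%nat ->
  (forall b, seqsum n K (fun zs => P b zs * T zs) <= c) ->
  seqsum n K (fun zs => / INR L ^ m * seqsum m L (fun b => P b zs) * T zs) <= c.
Proof.
  intros HL H. assert (HN : 0 < INR L ^ m) by (apply pow_lt, lt_0_INR; lia).
  rewrite (seqsum_ext _ _ _ (fun zs => / INR L ^ m * seqsum m L (fun b => P b zs * T zs))).
  - rewrite seqsum_scal, seqsum_swap.
    apply Rle_trans with (/ INR L ^ m * seqsum m L (fun _ => c)).
    + apply Rmult_le_compat_l; [apply Rlt_le, Rinv_0_lt_compat; lra|]. apply seqsum_le, H.
    + rewrite seqsum_const. right. field. lra.
  - intros zs. rewrite Rmult_assoc, (Rmult_comm _ (T zs)), <- seqsum_scal.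
    f_equal. apply seqsum_ext; intros; ring.
Qed.

Lemma chi2_product_pair n K qu q1 q2 :
  (forall z, 0 < qu z) -> sumR K qu = 1 -> sumR K q1 = 1 -> sumR K q2 = 1 ->
  seqsum n K (fun zs => (prodR qu zs - prodR q1 zs) * (prodR qu zs - prodR q2 zs) / prodR qu zs)
  = sumR K (fun z => q1 z * q2 z / qu z) ^ n - 1.
Proof.
  intros Hqu Hqu1 Hq1 Hq2.
  rewrite (seqsum_ext _ _ _ (fun zs => prodR qu zs - prodR q1 zs - prodR q2 zs
                                      + prodR (fun z => q1 z * q2 z / qu z) zs)).
  - rewrite seqsum_plus, !seqsum_minus, !seqsum_prodR, Hqu1, Hq1, Hq2, pow1. ring.
  - intros zs. rewrite <- prodR_quot by auto.
    pose proof (prodR_pos qu zs Hqu). field. lra.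
Qed.

Lemma chi2_product_mixture n K m L qu qb : (1 <= L)%nat ->
  (forall z, 0 < qu z) -> sumR K qu = 1 -> (forall b, sumR K (qb b) = 1) ->
  seqsum n K (fun zs =>
    (prodR qu zs - / INR L ^ m * seqsum m L (fun b => prodR (qb b) zs)) ^ 2 / prodR qu zs)
  = / (INR L ^ m) ^ 2 * seqsum m L (fun b => seqsum m L (fun b' =>
      sumR K (fun z => qb b z * qb b' z / qu z) ^ n - 1)).
Proof.
  intros HL Hqu Hqu1 Hqb1. set (N := INR L ^ m).
  assert (HN : 0 < N) by (apply pow_lt, lt_0_INR; lia).
  rewrite (seqsum_ext _ _ _ (fun zs => / N ^ 2 * seqsum m L (fun b => seqsum m L (fun b' =>
     (prodR qu zs - prodR (qb b) zs) * (prodR qu zs - prodR (qb b') zs) / prodR qu zs)))).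
  - rewrite seqsum_scal, seqsum_swap. f_equal. apply seqsum_ext; intros b.
    rewrite seqsum_swap. apply seqsum_ext; intros b'. apply chi2_product_pair; auto.
  - intros zs. pose proof (prodR_pos qu zs Hqu).
    replace (prodR qu zs - / N * seqsum m L (fun b => prodR (qb b) zs))
      with (/ N * seqsum m L (fun b => prodR qu zs - prodR (qb b) zs))
      by (rewrite seqsum_minus, seqsum_const; fold N; field; lra).
    replace ((/ N * seqsum m L (fun b => prodR qu zs - prodR (qb b) zs)) ^ 2 / prodR qu zs)
      with (/ N ^ 2 * (/ prodR qu zs * (seqsum m L (fun b => prodR qu zs - prodR (qb b) zs)
                                      * seqsum m L (fun b => prodR qu zs - prodR (qb b) zs))))
      by (field; lra).
    f_equal. rewrite seqsum_mul, <- seqsum_scal. apply seqsum_ext; intros b.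
    rewrite <- seqsum_scal. apply seqsum_ext; intros b'. field; lra.
Qed.

(** * The lower bound *)

Definition pair_diff (k : nat) (phi : nat -> nat) (i z : nat) : R :=
  hrow k (phi (2 * i)%nat) z - hrow k (phi (2 * i + 1)%nat) z.

Definition signed_diff (k m : nat) (phi : nat -> nat) (bs : list nat) (z : nat) : R :=
  sumR m (fun i => coin_sign bs i * pair_diff k phi i z).

Definition shift_coef (a eps : R) (k : nat) : R := a * beta eps / (INR k * KR k).

Definition cross_coef (k m : nat) (eps a : R) (phi : nat -> nat) (bs : list nat) (i : nat) : R :=
  shift_coef a eps k ^ 2 *
  sumR (HR_K k) (fun z => pair_diff k phi i z * (signed_diff k m phi bs z / HR_out k eps phi (unif k) z)).

Definition cross_rate (k m : nat) (eps a : R) : R :=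
  4 * (a * beta eps) ^ 4 * INR m / (INR k ^ 4 * (1 - beta eps) ^ 2).

(* The chi-square distance from the report law under [unif k] to the uniform mixture over [b]
   of the report laws under [perturbed a k m b], in the form given by [chi2_product_mixture]. *)
Definition HR_chi2 (n k m : nat) (eps a : R) (phi : nat -> nat) : R :=
  / (INR 2 ^ m) ^ 2 * seqsum m 2 (fun b => seqsum m 2 (fun b' =>
    sumR (HR_K k) (fun z => HR_out k eps phi (perturbed a k m b) z
                            * HR_out k eps phi (perturbed a k m b') z
                            / HR_out k eps phi (unif k) z) ^ n - 1)).

Section HadamardResponse.

Variables (k m r : nat) (eps a : R) (phi : nat -> nat).
Hypotheses (Hkm : k = (2 * m + r)%nat) (Hm : (1 <= m)%nat) (He0 : 0 < eps) (He1 : eps <= 1)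
  (Hphi : valid_injection k phi).

Let qu := HR_out k eps phi (unif k).

Lemma HR_out_unif_pos z : 0 < qu z.
Proof.
  destruct (beta_bounds eps He0 He1) as [_ [_ Hb]]. pose proof (KR_pos k).
  eapply Rlt_le_trans; [|apply HR_out_unif_ge; auto; lia]. apply Rdiv_lt_0_compat; lra.
Qed.

Lemma HR_out_unif_sum : sumR (HR_K k) qu = 1.
Proof. unfold qu. rewrite HR_out_sum by auto. apply unif_is_dist. lia. Qed.

Lemma HR_out_perturbed bs z :
  HR_out k eps phi (perturbed a k m bs) z = qu z + shift_coef a eps k * signed_diff k m phi bs z.
Proof.
  assert (0 < INR k) by (apply lt_0_INR; lia). pose proof (KR_pos k).
  unfold qu, HR_out. rewrite (sumR_ext _ _ (fun x => unif k x * HR_W k eps phi x z +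
     a / (INR k * KR k) * (pair_sign m bs x * (1 + beta eps * hrow k (phi x) z)))).
  - rewrite sumR_plus, sumR_scal, (sumR_pair_sign k m r) by auto. f_equal.
    rewrite (sumR_ext m _ (fun i => beta eps * (coin_sign bs i * pair_diff k phi i z)))
      by (intros; unfold pair_diff; ring).
    rewrite sumR_scal. unfold shift_coef, signed_diff. field. lra.
  - intros. unfold perturbed, unif. rewrite HR_W_eq. field. lra.
Qed.

Lemma pair_diff_orth i l : (i < m)%nat -> (l < m)%nat ->
  sumR (HR_K k) (fun z => pair_diff k phi i z * pair_diff k phi l z)
  = if i =? l then 2 * KR k else 0.
Proof.
  destruct Hphi as [Hrange Hinj]. intros Hi Hl. unfold pair_diff.
  set (A := phi (2 * i)%nat). set (B := phi (2 * i + 1)%nat).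
  set (C := phi (2 * l)%nat). set (E := phi (2 * l + 1)%nat).
  rewrite (sumR_ext _ _ (fun z => (hrow k A z * hrow k C z - hrow k A z * hrow k E z)
                              - (hrow k B z * hrow k C z - hrow k B z * hrow k E z)))
    by (intros; ring).
  rewrite !sumR_minus. unfold HR_K.
  destruct (Hrange (2 * i)%nat), (Hrange (2 * i + 1)%nat), (Hrange (2 * l)%nat),
    (Hrange (2 * l + 1)%nat); try lia.
  rewrite !hadamard_orth by auto.
  unfold A, B, C, E.
  destruct (Nat.eqb_spec i l) as [<- | Hil];
    repeat match goal with |- context [Nat.eqb ?x ?y] =>
      let H := fresh in destruct (Nat.eqb_spec x y) as [H | H]; [apply Hinj in H; try lia|] end;
    try congruence; lra.
Qed.

Lemma sumR_signed_diff_mul bs f :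
  sumR (HR_K k) (fun z => signed_diff k m phi bs z * f z)
  = sumR m (fun i => coin_sign bs i * sumR (HR_K k) (fun z => pair_diff k phi i z * f z)).
Proof.
  unfold signed_diff. rewrite (sumR_ext _ _ (fun z => sumR m (fun i =>
    coin_sign bs i * (pair_diff k phi i z * f z)))) by (intros; rewrite sumR_scalr; apply sumR_ext; intros; ring).
  rewrite sumR_swap. apply sumR_ext; intros. apply sumR_scal.
Qed.

Lemma sumR_signed_diff bs : sumR (HR_K k) (signed_diff k m phi bs) = 0.
Proof.
  destruct Hphi as [Hrange _].
  rewrite (sumR_ext _ _ (fun z => signed_diff k m phi bs z * 1)) by (intros; ring).
  rewrite sumR_signed_diff_mul, (sumR_ext m _ (fun _ => 0)), sumR_const; [ring|].
  intros i Hi. unfold pair_diff. rewrite (sumR_ext _ _ (fun z => hrow k (phi (2 * i)%nat) z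
                                                         - hrow k (phi (2 * i + 1)%nat) z))
    by (intros; ring).
  destruct (Hrange (2 * i)%nat), (Hrange (2 * i + 1)%nat); try lia.
  rewrite sumR_minus. unfold HR_K in *. rewrite !hadamard_rowsum by auto. ring.
Qed.

Lemma sumR_signed_diff_sq bs :
  sumR (HR_K k) (fun z => signed_diff k m phi bs z ^ 2) = 2 * KR k * INR m.
Proof.
  unfold signed_diff.
  rewrite (sumR_ext _ _ (fun z => sumR m (fun i => coin_sign bs i * pair_diff k phi i z)
                                * sumR m (fun l => coin_sign bs l * pair_diff k phi l z)))
    by (intros; ring).
  rewrite (sumR_orth_expansion _ m (pair_diff k phi) (2 * KR k)) by (intros; apply pair_diff_orth; auto).
  rewrite (sumR_ext m _ (fun _ => 1)), sumR_const
    by (intros i _; destruct (coin_sign_pm1 bs i) as [-> | ->]; ring).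
  ring.
Qed.

Lemma HR_out_cross bs bs' :
  sumR (HR_K k) (fun z => HR_out k eps phi (perturbed a k m bs) z
                          * HR_out k eps phi (perturbed a k m bs') z / qu z)
  = 1 + sumR m (fun i => coin_sign bs' i * cross_coef k m eps a phi bs i).
Proof.
  set (c := shift_coef a eps k).
  rewrite (sumR_ext _ _ (fun z => qu z + c * signed_diff k m phi bs z
     + c * signed_diff k m phi bs' z
     + c ^ 2 * (signed_diff k m phi bs' z * (signed_diff k m phi bs z / qu z)))).
  - rewrite !sumR_plus, !sumR_scal, HR_out_unif_sum, !sumR_signed_diff, sumR_signed_diff_mul.
    unfold cross_coef. fold c qu. rewrite <- sumR_scal.
    rewrite (sumR_ext m (fun i => c ^ 2 * _) (fun i => coin_sign bs' i * (c ^ 2 *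
       sumR (HR_K k) (fun z => pair_diff k phi i z * (signed_diff k m phi bs z / qu z)))))
      by (intros; ring).
    ring.
  - intros z _. rewrite !HR_out_perturbed. fold c. pose proof (HR_out_unif_pos z). field. lra.
Qed.

Lemma cross_coef_sq_le bs :
  sumR m (fun i => cross_coef k m eps a phi bs i ^ 2) <= cross_rate k m eps a.
Proof.
  destruct (beta_bounds eps He0 He1) as [_ [_ Hb]].
  pose proof (KR_pos k). assert (0 < INR k) by (apply lt_0_INR; lia).
  set (c := shift_coef a eps k). set (f := fun z => signed_diff k m phi bs z / qu z).
  assert (Hf : sumR (HR_K k) (fun z => f z ^ 2) <= (KR k / (1 - beta eps)) ^ 2 * (2 * KR k * INR m)).
  { rewrite <- (sumR_signed_diff_sq bs), <- sumR_scal. apply sumR_le; intros z _.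
    assert (Hq : (1 - beta eps) / KR k <= qu z) by (apply HR_out_unif_ge; auto; lia).
    assert (Hinv : / qu z <= KR k / (1 - beta eps)).
    { replace (KR k / (1 - beta eps)) with (/ ((1 - beta eps) / KR k)) by (field; lra).
      apply Rinv_le_contravar; [apply Rdiv_lt_0_compat|]; lra. }
    assert (0 < / qu z) by (apply Rinv_0_lt_compat, HR_out_unif_pos).
    unfold f, Rdiv. rewrite Rpow_mult_distr, Rmult_comm.
    apply Rmult_le_compat_r; [apply pow2_ge_0|]. apply pow_incr. lra. }
  assert (Hbessel := bessel_inequality (HR_K k) m (pair_diff k phi) (2 * KR k)
                       (fun i l Hi Hl => pair_diff_orth i l Hi Hl) f ltac:(lra)).
  unfold cross_coef. fold c qu.
  rewrite (sumR_ext m _ (fun i => c ^ 4 * sumR (HR_K k) (fun z => pair_diff k phi i z * f z) ^ 2))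
    by (intros; unfold f; ring).
  rewrite sumR_scal.
  apply Rle_trans with (c ^ 4 * (2 * KR k * ((KR k / (1 - beta eps)) ^ 2 * (2 * KR k * INR m)))).
  - apply Rmult_le_compat_l; [replace (c ^ 4) with ((c ^ 2) ^ 2) by ring; apply pow2_ge_0|].
    eapply Rle_trans; [exact Hbessel|]. apply Rmult_le_compat_l; lra.
  - right. unfold c, shift_coef, cross_rate. field. lra.
Qed.

Lemma HR_chi2_le n : 0 <= a <= 1 -> INR n ^ 2 * cross_rate k m eps a <= 1 / 20 ->
  HR_chi2 n k m eps a phi <= 1 / 19.
Proof.
  intros Ha Hsmall. set (delta := INR n ^ 2 * cross_rate k m eps a) in Hsmall.
  set (A := fun b b' => sumR (HR_K k) (fun z => HR_out k eps phi (perturbed a k m b) z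
                                         * HR_out k eps phi (perturbed a k m b') z / qu z)).
  assert (Hrow : forall b, seqsum m 2 (fun b' => A b b' ^ n) <= 2 ^ m / (1 - delta)).
  { intros b.
    assert (Hc : INR n ^ 2 * sumR m (fun i => cross_coef k m eps a phi b i ^ 2) <= delta)
      by (apply Rmult_le_compat_l; [apply pow2_ge_0 | apply cross_coef_sq_le]).
    eapply Rle_trans; [apply (seqsum_pow_affine_le m n _ (cross_coef k m eps a phi b))|].
    - intros b'. apply sumR_nonneg; intros z _. apply Rmult_le_pos.
      + apply Rmult_le_pos; apply HR_out_nonneg; auto;
          apply (perturbed_is_dist a k m r); auto.
      + apply Rlt_le, Rinv_0_lt_compat, HR_out_unif_pos.
    - intros b'. apply HR_out_cross.
    - lra.
    - unfold Rdiv. apply Rmult_le_compat_l; [apply pow_le; lra|].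
      apply Rinv_le_contravar; lra. }
  apply Rle_trans with (/ (1 - delta) - 1).
  - unfold HR_chi2. replace (INR 2) with 2 by (simpl; lra).
    assert (0 < 2 ^ m) by (apply pow_lt; lra).
    apply Rle_trans with (/ (2 ^ m) ^ 2 * seqsum m 2 (fun _ => 2 ^ m / (1 - delta) - 2 ^ m)).
    + apply Rmult_le_compat_l; [apply Rlt_le, Rinv_0_lt_compat, pow_lt; lra|].
      apply seqsum_le; intros b. rewrite seqsum_minus, seqsum_const.
      replace (INR 2) with 2 by (simpl; lra).
      unfold Rminus. apply Rplus_le_compat; [apply Hrow | right; ring].
    + rewrite seqsum_const. replace (INR 2) with 2 by (simpl; lra). right. field. lra.
  - assert (/ (1 - delta) <= / (19 / 20)) by (apply Rinv_le_contravar; lra).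
    replace (/ (19 / 20)) with (20 / 19) in * by field. lra.
Qed.

End HadamardResponse.

Lemma HR_chi2_ge_of_test k m r n gamma eps phi T :
  k = (2 * m + r)%nat -> (r <= 1)%nat -> (1 <= m)%nat ->
  0 < gamma -> gamma <= 1 / 4 -> 0 < eps -> eps <= 1 ->
  valid_injection k phi -> (forall zs, 0 <= T zs <= 1) ->
  accept_prob n k eps phi (unif k) T >= 2 / 3 ->
  (forall p, is_dist k p -> dTV k p (unif k) > gamma ->
     1 - accept_prob n k eps phi p T >= 2 / 3) ->
  1 / 12 <= HR_chi2 n k m eps (4 * gamma) phi.
Proof.
  intros Hkm Hr Hm Hg0 Hg1 He0 He1 Hphi HT Hacc Hrej.
  unfold HR_chi2. set (a := 4 * gamma). set (qu := HR_out k eps phi (unif k)).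
  assert (Hdist : forall bs, is_dist k (perturbed a k m bs))
    by (intros; apply (perturbed_is_dist a k m r); unfold a; auto; lra).
  assert (Hqu1 : sumR (HR_K k) qu = 1) by (apply (HR_out_unif_sum k m r); auto).
  rewrite <- chi2_product_mixture.
  - apply chi2_ge_of_test with T; auto.
    + intros; apply prodR_pos, (HR_out_unif_pos k m r); auto.
    + rewrite seqsum_prodR, Hqu1. apply pow1.
    + apply Rge_le, Hacc.
    + apply mixture_test_le; [lia|]. intros b.
      assert (Hfar := perturbed_far a gamma k m r b Hkm Hr Hm eq_refl Hg0).
      specialize (Hrej _ (Hdist b) Hfar). unfold accept_prob in Hrej.
      enough (H : seqsum n (HR_K k) (fun zs => prodR (HR_out k eps phi (perturbed a k m b)) zs
                                              * T zs) <= 1 / 3) by exact H.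
      lra.
  - lia.
  - apply (HR_out_unif_pos k m r); auto.
  - exact Hqu1.
  - intros b. rewrite HR_out_sum by auto. apply Hdist.
Qed.

Lemma HR_test_rate_gt k m r n gamma eps phi T :
  k = (2 * m + r)%nat -> (r <= 1)%nat -> (1 <= m)%nat ->
  0 < gamma -> gamma <= 1 / 4 -> 0 < eps -> eps <= 1 ->
  valid_injection k phi -> (forall zs, 0 <= T zs <= 1) ->
  accept_prob n k eps phi (unif k) T >= 2 / 3 ->
  (forall p, is_dist k p -> dTV k p (unif k) > gamma ->
     1 - accept_prob n k eps phi p T >= 2 / 3) ->
  1 / 20 < INR n ^ 2 * cross_rate k m eps (4 * gamma).
Proof.
  intros Hkm Hr Hm Hg0 Hg1 He0 He1 Hphi HT Hacc Hrej.
  assert (Hge := HR_chi2_ge_of_test k m r n gamma eps phi T Hkm Hr Hm Hg0 Hg1 He0 He1 Hphi HT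
                   Hacc Hrej).
  destruct (Rlt_or_le (1 / 20) (INR n ^ 2 * cross_rate k m eps (4 * gamma))) as [|Hsmall];
    [assumption | exfalso].
  assert (Hle : HR_chi2 n k m eps (4 * gamma) phi <= 1 / 19)
    by (apply (HR_chi2_le k m r); auto; lra).
  lra.
Qed.

Lemma cross_rate_le k m gamma eps :
  (1 <= k)%nat -> (2 * m <= k)%nat -> 0 < gamma -> 0 < eps -> eps <= 1 ->
  cross_rate k m eps (4 * gamma) <= 16200 * (gamma * eps) ^ 4 / INR k ^ 3.
Proof.
  intros Hk Hmk Hg He0 He1. unfold cross_rate.
  destruct (beta_bounds eps He0 He1) as [Hb0 [Hb1 Hb2]].
  assert (Hk0 : 0 < INR k) by (apply lt_0_INR; lia).
  assert (Hm : 2 * INR m <= INR k)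
    by (apply le_INR in Hmk; rewrite mult_INR in Hmk; simpl in Hmk; lra).
  assert (Hm0 : 0 <= INR m) by apply pos_INR.
  assert (HX : (4 * gamma * beta eps) ^ 4 <= 1296 * (gamma * eps) ^ 4).
  { replace (1296 * (gamma * eps) ^ 4) with ((6 * (gamma * eps)) ^ 4) by ring.
    apply pow_incr. nra. }
  assert (HY : / (1 - beta eps) ^ 2 <= 25 / 4).
  { replace (25 / 4) with (/ (2 / 5) ^ 2) by field.
    apply Rinv_le_contravar; [nra | apply pow_incr; lra]. }
  assert (HZ : INR m / INR k ^ 4 <= 1 / (2 * INR k ^ 3)).
  { assert (0 < INR k ^ 3) by (apply pow_lt; lra).
    unfold Rdiv. apply Rmult_le_reg_r with (2 * INR k ^ 4); [nra|].
    replace (INR m * / INR k ^ 4 * (2 * INR k ^ 4)) with (2 * INR m) by (field; lra).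
    replace (1 * / (2 * INR k ^ 3) * (2 * INR k ^ 4)) with (INR k) by (field; lra). lra. }
  replace (4 * (4 * gamma * beta eps) ^ 4 * INR m / (INR k ^ 4 * (1 - beta eps) ^ 2))
    with (4 * ((4 * gamma * beta eps) ^ 4 * / (1 - beta eps) ^ 2) * (INR m / INR k ^ 4))
    by (field; lra).
  replace (16200 * (gamma * eps) ^ 4 / INR k ^ 3)
    with (4 * (1296 * (gamma * eps) ^ 4 * (25 / 4)) * (1 / (2 * INR k ^ 3))) by (field; lra).
  assert (0 <= (4 * gamma * beta eps) ^ 4) by (apply pow_le; nra).
  assert (0 <= / (1 - beta eps) ^ 2) by (apply Rlt_le, Rinv_0_lt_compat; nra).
  apply Rmult_le_compat.
  - apply Rmult_le_pos; [lra|]. apply Rmult_le_pos; assumption.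
  - apply Rmult_le_pos; [assumption|]. apply Rlt_le, Rinv_0_lt_compat, pow_lt; lra.
  - apply Rmult_le_compat_l; [lra|]. apply Rmult_le_compat; assumption.
  - exact HZ.
Qed.

Lemma sample_size_of_rate n k gamma eps : (1 <= k)%nat -> 0 < gamma -> 0 < eps ->
  1 / 20 < INR n ^ 2 * (16200 * (gamma * eps) ^ 4 / INR k ^ 3) ->
  INR n >= 1 / 1000 * Rpower (INR k) (3 / 2) / (gamma ^ 2 * eps ^ 2).
Proof.
  intros Hk Hg He H.
  assert (Hk0 : 0 < INR k) by (apply lt_0_INR; lia).
  assert (Hk3 : 0 < INR k ^ 3) by (apply pow_lt; lra).
  assert (Hge : 0 < gamma * eps) by nra.
  set (Y := INR n * (gamma * eps) ^ 2).
  assert (HY0 : 0 <= Y) by (apply Rmult_le_pos; [apply pos_INR | apply pow2_ge_0]).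
  replace (INR n ^ 2 * (16200 * (gamma * eps) ^ 4 / INR k ^ 3)) with (16200 * Y ^ 2 / INR k ^ 3)
    in H by (unfold Y; field; lra).
  apply (Rmult_lt_compat_r (INR k ^ 3)) in H; [|assumption].
  replace (16200 * Y ^ 2 / INR k ^ 3 * INR k ^ 3) with (16200 * Y ^ 2) in H by (field; lra).
  set (Rk := Rpower (INR k) (3 / 2)).
  assert (HRk : Rk * Rk = INR k ^ 3).
  { unfold Rk. rewrite <- Rpower_plus. replace (3 / 2 + 3 / 2) with (INR 3) by (simpl; lra).
    apply Rpower_pow. assumption. }
  assert (HRk0 : 0 < Rk) by (unfold Rk, Rpower; apply exp_pos).
  assert (HYRk : Rk / 1000 <= Y).
  { destruct (Rle_or_lt (Rk / 1000) Y) as [|HY]; [assumption|].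
    assert (Y * Y <= Rk / 1000 * (Rk / 1000)) by (apply Rmult_le_compat; lra). nra. }
  apply Rle_ge, Rmult_le_reg_r with (gamma ^ 2 * eps ^ 2); [nra|].
  replace (1 / 1000 * Rk / (gamma ^ 2 * eps ^ 2) * (gamma ^ 2 * eps ^ 2)) with (Rk / 1000)
    by (field; nra).
  replace (INR n * (gamma ^ 2 * eps ^ 2)) with Y by (unfold Y; ring). assumption.
Qed.

Theorem theorem5p3 :
  exists c : R, 0 < c /\
  forall (k : nat) (gamma eps : R) (phi : nat -> nat) (n : nat) (T : list nat -> R),
    (2 <= k)%nat ->
    0 < gamma -> gamma <= 1/4 ->
    0 < eps -> eps <= 1 ->
    valid_injection k phi ->
    (forall zs, 0 <= T zs <= 1) ->
    accept_prob n k eps phi (unif k) T >= 2/3 ->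
    (forall p, is_dist k p -> dTV k p (unif k) > gamma ->
       1 - accept_prob n k eps phi p T >= 2/3) ->
    INR n >= c * Rpower (INR k) (3/2) / (gamma ^ 2 * eps ^ 2).
Proof.
  exists (1 / 1000). split; [lra|].
  intros k gamma eps phi n T Hk Hg0 Hg1 He0 He1 Hphi HT Hacc Hrej.
  set (m := (k / 2)%nat). set (r := (k mod 2)%nat).
  assert (Hkm : k = (2 * m + r)%nat) by (apply Nat.div_mod; lia).
  assert (Hr : (r <= 1)%nat) by (pose proof (Nat.mod_upper_bound k 2); unfold r; lia).
  apply sample_size_of_rate; [lia | assumption | assumption |].
  eapply Rlt_le_trans; [apply (HR_test_rate_gt k m r n gamma eps phi T); auto; lia|].
  apply Rmult_le_compat_l; [apply pow2_ge_0|]. apply cross_rate_le; auto; lia.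
Qed.
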